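(* Let $\varepsilon\in(0,1/2)$ and let $V_N=\mathbb Z/p_N\mathbb Z$ with $p_N\ge3$. The family $\mathcal Q(\varepsilon)=\{Q_\delta:\delta\in[-\varepsilon,\varepsilon]\}$ is $\frac{1+2\varepsilon}{1-2\varepsilon}$-stable with respect to any probability measure $\mu_0\in\mathcal S_N(\varepsilon)$.
   Context: $Q$ is the simple random walk kernel on $V_N=\mathbb Z/p_N\mathbb Z$: $Q(x,y)=1/2$ if $y=x\pm1$ and $0$ otherwise. For $\delta\in(-1/2,1/2)$, $Q_\delta=Q+\Delta_\delta$ where $\Delta_\delta(0,1)=\delta$, $\Delta_\delta(0,-1)=-\delta$ and $\Delta_\delta(x,y)=0$ otherwise. $\mathcal S_N(\varepsilon)$ is the set of probability measures $\mu$ on $V_N$ of the form $\mu(x)=1/p_N+a_{\mu,x}$ with $a_{\mu,x}=-a_{\mu,-x}$ and $|a_{\mu,x}|\le2\varepsilon/p_N$ for all $x\in V_N$. A family $\mathcal Q$ of Markov kernels is $c$-stable with respect to $\mu_0$ if for every sequence $(K_i)_{i\ge1}$ with all $K_i\in\mathcal Q$, setting $\mu_n=\mu_0K_1\cdots K_n$, one has $c^{-1}\le\mu_n(x)/\mu_0(x)\le c$ for all $n\ge0$, $x$. *)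

(* V_N = 'Z_p (ring Z/pZ, p >= 3 assumed in the theorem). *)
From HB Require Import structures.
From mathcomp Require Import all_boot all_order all_algebra.
Unset Printing Implicit Defensive.
Import Order.TTheory GRing.Theory Num.Theory.
Local Open Scope ring_scope.

Definition kernel (R : realFieldType) (p : nat) := 'Z_p -> 'Z_p -> R.
Definition meas (R : realFieldType) (p : nat) := 'Z_p -> R.

Definition Qsrw (R : realFieldType) (p : nat) : kernel R p :=
  fun x y => if (y == x + 1) || (y == x - 1) then 2^-1 else 0.

Definition Delta (R : realFieldType) (p : nat) (d : R) : kernel R p :=
  fun x y => if x == 0 then (if y == 1 then d else if y == -1 then - d else 0)
             else 0.

Definition Qdelta (R : realFieldType) (p : nat) (d : R) : kernel R p :=
  fun x y => Qsrw R p x y + Delta R p d x y.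

Definition Qfamily (R : realFieldType) (p : nat) (eps : R) (K : kernel R p) : Prop :=
  exists d : R, - eps <= d <= eps /\ K = Qdelta R p d.

Definition is_prob (R : realFieldType) (p : nat) (mu : meas R p) : Prop :=
  (forall x, 0 <= mu x) /\ \sum_(x : 'Z_p) mu x = 1.

Definition SN (R : realFieldType) (p : nat) (eps : R) (mu : meas R p) : Prop :=
  is_prob R p mu /\
  exists a : 'Z_p -> R,
    (forall x, mu x = (p%:R)^-1 + a x) /\
    (forall x, a x = - a (- x)) /\
    (forall x, `|a x| <= 2 * eps / p%:R).

Definition act (R : realFieldType) (p : nat) (mu : meas R p) (K : kernel R p) : meas R p :=
  fun y => \sum_(x : 'Z_p) mu x * K x y.

(* mu_n = mu_0 K_1 ... K_n, kernels indexed from 1 *)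
Fixpoint mu_n (R : realFieldType) (p : nat) (mu0 : meas R p) (Ks : nat -> kernel R p)
  (n : nat) : meas R p :=
  match n with
  | 0 => mu0
  | n'.+1 => act R p (mu_n R p mu0 Ks n') (Ks n)
  end.

Definition stable (R : realFieldType) (p : nat) (c : R)
  (fam : kernel R p -> Prop) (mu0 : meas R p) : Prop :=
  forall Ks : nat -> kernel R p, (forall i, (1 <= i)%N -> fam (Ks i)) ->
  forall (n : nat) (x : 'Z_p),
    c^-1 <= mu_n R p mu0 Ks n x / mu0 x <= c.

(* Write [mu = 1/p + a].  Since [Delta_delta] only moves mass out of [0],
   [mu Q_delta = 1/p + (a(.-1) + a(.+1))/2 + mu(0) Delta_delta(0, .)].  When [a]
   is odd, [mu(0) = 1/p] and the new deviation is again odd.  It also stays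
   below [2 eps / p]: away from [+-1] it is an average of two deviations, and
   at [+-1] one of them is [a(0) = 0], which leaves room for the term
   [+-delta / p].  Deviations bounded by [2 eps / p] give the ratio bounds. *)

From mathcomp Require Import all_boot all_order all_algebra.
From mathcomp Require Import ring lra.
Import Order.TTheory GRing.Theory Num.Theory.
Local Open Scope ring_scope.

Section Kernels.
Variables (R : realFieldType) (p : nat).
Hypothesis p_gt2 : (2 < p)%N.

Lemma Zp_one_neq_opp1 : (1 : 'Z_p) != -1.
Proof. by rewrite -addr_eq0; case: p p_gt2 => [|[|[|p']]]. Qed.

Lemma sum_mul_eq (mu : meas R p) (c : R) (j : 'Z_p) :
  \sum_(x : 'Z_p) mu x * (if x == j then c else 0) = mu j * c.
Proof.
rewrite (bigD1 j) //= eqxx big1 ?addr0 // => x /negPf ->; exact: mulr0.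
Qed.

Lemma Qsrw_split (x y : 'Z_p) :
  Qsrw R p x y = (if x == y - 1 then 2^-1 else 0) + (if x == y + 1 then 2^-1 else 0).
Proof.
have eq_pred : (y == x + 1) = (x == y - 1).
  by apply/eqP/eqP => [->|->]; rewrite ?addrK ?subrK.
have eq_succ : (y == x - 1) = (x == y + 1).
  by apply/eqP/eqP => [->|->]; rewrite ?subrK ?addrK.
rewrite /Qsrw eq_pred eq_succ.
case: eqP => [xE|_]; case: eqP => [xE'|_] //=; rewrite ?addr0 ?add0r //.
have : y - 1 = y + 1 by rewrite -xE -xE'.
by move/addrI/eqP; rewrite eq_sym (negPf Zp_one_neq_opp1).
Qed.

Lemma act_Qsrw (mu : meas R p) (y : 'Z_p) :
  act R p mu (Qsrw R p) y = (mu (y - 1) + mu (y + 1)) / 2.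
Proof.
rewrite /act; under eq_bigr do rewrite Qsrw_split mulrDr.
by rewrite big_split /= !sum_mul_eq mulrDl.
Qed.

Lemma act_Delta (d : R) (mu : meas R p) (y : 'Z_p) :
  act R p mu (Delta R p d) y = mu 0 * Delta R p d 0 y.
Proof.
rewrite /act -sum_mul_eq; apply: eq_bigr => x _.
by rewrite {1}/Delta; case: eqP => [->|]; rewrite ?eqxx.
Qed.

Lemma act_Qdelta (d : R) (mu : meas R p) (y : 'Z_p) :
  act R p mu (Qdelta R p d) y
  = (mu (y - 1) + mu (y + 1)) / 2 + mu 0 * Delta R p d 0 y.
Proof.
rewrite -act_Qsrw -act_Delta /act -big_split /=.
by apply: eq_bigr => x _; rewrite /Qdelta mulrDr.
Qed.

Lemma invn_gt0 : 0 < p%:R^-1 :> R.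
Proof. by rewrite invr_gt0 ltr0n; apply: leq_trans p_gt2. Qed.

Definition dev (mu : meas R p) (x : 'Z_p) : R := mu x - p%:R^-1.

Definition odd_dev (mu : meas R p) : Prop :=
  forall x, dev mu (- x) = - dev mu x.

Definition dev_bounded (b : R) (mu : meas R p) : Prop :=
  forall x, `|dev mu x| <= b.

Lemma odd_dev_at0 (mu : meas R p) : odd_dev mu -> mu 0 = p%:R^-1.
Proof. by move/(_ 0); rewrite oppr0 /dev => h; lra. Qed.

Lemma Delta0_oddV (d : R) (y : 'Z_p) :
  Delta R p d 0 (- y) = - Delta R p d 0 y.
Proof.
rewrite /Delta eqxx !eqr_oppLR opprK.
case: (eqVneq y 1) => [->|_]; first by rewrite ifN //; apply: Zp_one_neq_opp1.
by case: (y =P -1); rewrite ?opprK ?oppr0.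
Qed.

Lemma act_Qdelta_odd_dev (d : R) (mu : meas R p) :
  odd_dev mu -> odd_dev (act R p mu (Qdelta R p d)).
Proof.
move=> mu_odd y; rewrite /dev !act_Qdelta odd_dev_at0 // Delta0_oddV.
have -> : - y - 1 = - (y + 1) by rewrite opprD.
have -> : - y + 1 = - (y - 1) by rewrite opprB addrC.
by move: (mu_odd (y + 1)) (mu_odd (y - 1)); rewrite /dev; lra.
Qed.

Lemma act_Qdelta_dev_bounded (eps d : R) (mu : meas R p) :
  - eps <= d <= eps -> odd_dev mu -> dev_bounded (2 * eps / p%:R) mu ->
  dev_bounded (2 * eps / p%:R) (act R p mu (Qdelta R p d)).
Proof.
move=> /andP[dge dle] mu_odd mu_bd y.
set q := p%:R^-1 : R.
have q_gt0 : 0 < q := invn_gt0.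
have bd x : - (2 * eps * q) <= mu x - q <= 2 * eps * q.
  by rewrite -ler_norml; exact: mu_bd.
have qd : - (q * eps) <= q * d <= q * eps.
  by rewrite -mulrN !ler_pM2l // dge.
have mu0E : mu 0 = q := odd_dev_at0 _ mu_odd.
rewrite /dev act_Qdelta mu0E -/q ler_norml /Delta eqxx.
case: (eqVneq y 1) => [->|_].
  by rewrite subrr mu0E; move: (bd (1 + 1)); lra.
case: (eqVneq y (-1)) => [->|_].
  by rewrite addNr mu0E; move: (bd (-1 - 1)); lra.
by move: (bd (y - 1)) (bd (y + 1)); lra.
Qed.

End Kernels.

Lemma ratio_bounds (R : realFieldType) (q e u v : R) :
  0 < q -> 0 <= e < 1 ->
  `|u - q| <= e * q -> `|v - q| <= e * q ->
  ((1 + e) / (1 - e))^-1 <= v / u <= (1 + e) / (1 - e).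
Proof.
move=> q_gt0 /andP[e_ge0 e_lt1]; rewrite !ler_norml => /andP[u1 u2] /andP[v1 v2].
have u_gt0 : 0 < u by nra.
have em_gt0 : 0 < 1 - e by lra.
have ep_gt0 : 0 < 1 + e by lra.
rewrite invf_div; apply/andP; split.
- by rewrite ler_pdivlMr // mulrAC ler_pdivrMr //; nra.
- by rewrite ler_pdivrMr // mulrAC ler_pdivlMr //; nra.
Qed.

Theorem claim3p4 (R : realFieldType) (p : nat) (eps : R) :
  (3 <= p)%N -> 0 < eps -> eps < 2^-1 ->
  forall mu0 : meas R p, SN R p eps mu0 ->
  stable R p ((1 + 2 * eps) / (1 - 2 * eps)) (Qfamily R p eps) mu0.
Proof.
move=> p_gt2 eps_gt0 eps_lt mu0 [_ [a [mu0E [a_odd a_bd]]]] Ks Ks_fam.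
have dev0E x : dev R p mu0 x = a x by rewrite /dev mu0E addrC addKr.
have mu_n_inv n : odd_dev R p (mu_n R p mu0 Ks n) /\
             dev_bounded R p (2 * eps / p%:R) (mu_n R p mu0 Ks n).
  elim: n => [|n [IHodd IHbd]] /=.
    by split=> x; rewrite !dev0E; [rewrite a_odd opprK | exact: a_bd].
  have [d [d_range ->]] := Ks_fam n.+1 isT.
  split; [exact: act_Qdelta_odd_dev | exact: act_Qdelta_dev_bounded].
move=> n x; have [_ mun_bd] := mu_n_inv n; have [_ mu0_bd] := mu_n_inv 0%N.
apply: (@ratio_bounds _ p%:R^-1 (2 * eps)); first exact: invn_gt0.
- by apply/andP; split; lra.
- exact: mu0_bd.
- exact: mun_bd.
Qed.
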